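(* Let $0<\gamma'<\gamma$ and $\varepsilon>0$. For any finite class $\mathcal{H}$ of hypotheses $\{-1,+1\}^d\to\{-1,+1\}$, there exists an $\varepsilon$-sample-$\nabla_0$DP algorithm that, given a finite set $S$ of labeled examples, outputs $h^{priv}\in\mathcal{H}$ such that $$\mathbb{E}[\mathcal{R}_{\gamma'}(h^{priv};S)]\le\inf_{h\in\mathcal{H}}\mathcal{R}_\gamma(h;S)+O\!\left(\frac{\log|\mathcal{H}|}{\varepsilon(\gamma-\gamma')d\cdot|S|}\right).$$
   Context: Labeled examples are $(x,y)\in\{-1,+1\}^d\times\{-1,+1\}$. For a hypothesis $h$ and distribution $\mathcal{D}$, $\mathcal{R}_\gamma(h,\mathcal{D})=\Pr_{(x,y)\sim\mathcal{D}}[\exists\check x\in\{-1,+1\}^d: h(\check x)\ne y\wedge\|\check x-x\|_0\le\gamma d]$ with $\|\cdot\|_0$ the Hamming distance; $\mathcal{R}_\gamma(h;S)$ is this quantity for $\mathcal{D}$ uniform on $S$. An algorithm $M$ on datasets of labeled examples is $\varepsilon$-sample-$\nabla_0$DP if $\Pr[M(S)\in E]\le e^\varepsilon\Pr[M(S')\in E]$ for all $E$ whenever $S,S'$ differ only in a single coordinate of the feature vector of a single example (labels unchanged). *)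

From mathcomp Require Import all_boot all_order all_algebra.
From mathcomp Require Import all_classical all_reals all_analysis.
Set Implicit Arguments. Unset Strict Implicit. Unset Printing Implicit Defensive.
Import Order.TTheory GRing.Theory Num.Theory.
Local Open Scope ring_scope.

(* Feature vectors in {-1,+1}^d, encoded as bool (true = +1). *)
Definition feat (d : nat) := {ffun 'I_d -> bool}.
Definition example (d : nat) := (feat d * bool)%type.
Definition hyp (d : nat) := {ffun feat d -> bool}.

Definition hamming d (x x' : feat d) : nat := #|[set i | x i != x' i]|.

Definition robust_err (R : realType) d (gamma : R) (h : hyp d) (e : example d) : bool :=
  [exists x' : feat d, (h x' != e.2) && ((hamming x' e.1)%:R <= gamma * d%:R)].

Definition robust_risk (R : realType) d (gamma : R) (h : hyp d) (S : seq (example d)) : R :=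
  (count (robust_err gamma h) S)%:R / (size S)%:R.

(* A randomized algorithm with outputs in hyp d: dataset |-> probability mass function. *)
Definition mechanism (R : realType) d := seq (example d) -> {ffun hyp d -> R}.

Definition is_pmf (R : realType) d (p : {ffun hyp d -> R}) : Prop :=
  (forall h, 0 <= p h) /\ \sum_h p h = 1.

Definition default_example d : example d := ([ffun => false], false).

Definition sample_neighbors d (S S' : seq (example d)) : Prop :=
  size S = size S' /\
  exists k, (k < size S)%N /\
    (forall l, l != k -> nth (default_example d) S l = nth (default_example d) S' l) /\
    (nth (default_example d) S k).2 = (nth (default_example d) S' k).2 /\
    exists i : 'I_d, forall j : 'I_d, j != i ->
      (nth (default_example d) S k).1 j = (nth (default_example d) S' k).1 j.

Definition sample_DP (R : realType) d (eps : R) (M : mechanism R d) : Prop :=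
  forall S S', sample_neighbors S S' ->
    forall E : {set hyp d}, \sum_(h in E) M S h <= expR eps * \sum_(h in E) M S' h.

From mathcomp Require Import all_boot all_order all_algebra.
From mathcomp Require Import all_classical all_reals all_analysis.
From mathcomp Require Import lra ring.
Set Implicit Arguments. Unset Strict Implicit.
Import Order.TTheory GRing.Theory Num.Theory.
Local Open Scope ring_scope.

(* Run the exponential mechanism on a Lipschitz surrogate of the robust loss.
   If k is the Hamming distance from x to the nearest point misclassified by h,
   the ramp loss clamp01 ((gamma d - k) / ((gamma - gamma') d)) is 1 when the
   gamma'-robust error occurs and 0 unless the gamma-robust error occurs, so its
   empirical risk lies between R_gamma'(h; S) and R_gamma(h; S).  Flipping one
   feature bit moves k by at most one, so this risk has sensitivity
   1 / ((gamma - gamma') d |S|); the Gibbs distribution proportional to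
   exp (- b * risk) with b = eps (gamma - gamma') d |S| / 2 is then eps-DP, and
   its expected risk exceeds that of any h0 in H by at most 4 ln |H| / b. *)

Section RealFacts.
Variable R : realType.

Lemma mulr_expRN_le1 (x : R) : x * expR (- x) <= 1.
Proof.
have x_le : x <= expR x by have := expR_ge1Dx x; lra.
have -> : 1 = expR x * expR (- x) by rewrite -expRD subrr expR0.
by rewrite ler_wpM2r // ltW // expR_gt0.
Qed.

Lemma mulr_expRN_le (t : R) : t * expR (- t) <= 2 * expR (- (t / 2)).
Proof.
have -> : t * expR (- t) = 2 * ((t / 2) * expR (- (t / 2))) * expR (- (t / 2)).
  by rewrite [in LHS](splitr t) opprD expRD; field.
apply: ler_wpM2r; first exact/ltW/expR_gt0.
by rewrite -[leRHS]mulr1 ler_wpM2l // mulr_expRN_le1.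
Qed.

Lemma ln_ge_1_subV (x : R) : 0 < x -> 1 - x^-1 <= ln x.
Proof.
move=> x_gt0.
have xV_gt0 : 0 < x^-1 by rewrite invr_gt0.
have /le_ln1Dx : -1 < x^-1 - 1 by lra.
rewrite addrC subrK lnV ?posrE //; lra.
Qed.

End RealFacts.

Section Gibbs.
Variables (R : realType) (T : finType) (H : {set T}).

Definition gibbs (b : R) (L : T -> R) : {ffun T -> R} :=
  [ffun h => if h \in H
             then expR (- b * L h) / \sum_(h' in H) expR (- b * L h') else 0].

Lemma gibbs_out (b : R) (L : T -> R) h : h \notin H -> gibbs b L h = 0.
Proof. by rewrite ffunE => /negbTE ->. Qed.

Lemma expR_le_gibbs_partition (b : R) (L : T -> R) h :
  h \in H -> expR (- b * L h) <= \sum_(h' in H) expR (- b * L h').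
Proof.
move=> hH; rewrite (bigD1 h) //= lerDl.
by apply: sumr_ge0 => h' _; exact/ltW/expR_gt0.
Qed.

Lemma gibbs_partition_gt0 (b : R) (L : T -> R) h :
  h \in H -> 0 < \sum_(h' in H) expR (- b * L h').
Proof. by move=> /(expR_le_gibbs_partition b L); apply: lt_le_trans; apply: expR_gt0. Qed.

Lemma gibbs_ge0 (b : R) (L : T -> R) h : 0 <= gibbs b L h.
Proof.
rewrite ffunE; case: ifP => // hH.
by rewrite divr_ge0 // ltW // ?expR_gt0 // (gibbs_partition_gt0 _ _ hH).
Qed.

Lemma gibbs_sum1 (b : R) (L : T -> R) h0 : h0 \in H -> \sum_h gibbs b L h = 1.
Proof.
move=> h0H; under eq_bigr do rewrite ffunE.
by rewrite -big_mkcond /= -mulr_suml divff // gt_eqF // (gibbs_partition_gt0 _ _ h0H).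
Qed.

Lemma gibbs_le_expR_gap (b : R) (L : T -> R) h0 h :
  h0 \in H -> gibbs b L h <= expR (- (b * (L h - L h0))).
Proof.
move=> h0H; rewrite ffunE; case: ifP => hH; last exact/ltW/expR_gt0.
rewrite ler_pdivrMr ?(gibbs_partition_gt0 _ _ hH) //.
apply: le_trans (ler_wpM2l (ltW (expR_gt0 _)) (expR_le_gibbs_partition b L h0H)).
rewrite -expRD.
by have -> : - (b * (L h - L h0)) + - b * L h0 = - b * L h by ring.
Qed.

Lemma gibbs_le_expR_mul (b c : R) (L L' : T -> R) h :
  0 <= b -> (forall h', h' \in H -> `|L h' - L' h'| <= c) ->
  gibbs b L h <= expR (2 * b * c) * gibbs b L' h.
Proof.
move=> b_ge0 LL'; rewrite !ffunE; case: ifP => hH; last by rewrite mulr0.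
have weight_le L1 L2 h' : `|L1 h' - L2 h'| <= c ->
    expR (- b * L1 h') <= expR (b * c) * expR (- b * L2 h').
  by rewrite -expRD ler_expR ler_distl => /andP[+ _]; nra.
have Z_le : \sum_(h' in H) expR (- b * L' h')
             <= expR (b * c) * \sum_(h' in H) expR (- b * L h').
  by rewrite mulr_sumr; apply: ler_sum => h' /LL'; rewrite distrC; exact: weight_le.
have Z_gt0 := gibbs_partition_gt0 b L hH; have Z'_gt0 := gibbs_partition_gt0 b L' hH.
rewrite (_ : 2 * b * c = b * c + b * c) ?expRD; last by ring.
set w := expR (- b * L h); set w' := expR (- b * L' h).
set Z := \sum_(h' in H) _; set Z' := \sum_(h' in H) _; set e := expR (b * c).
have ZV_le : Z^-1 <= e / Z' by rewrite ler_pdivlMr // mulrC ler_pdivrMr.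
apply: le_trans (_ : (e * w') / Z <= _).
  by apply: ler_wpM2r; [rewrite invr_ge0 ltW | exact: weight_le (LL' h hH)].
apply: le_trans (_ : (e * w') * (e / Z') <= _).
  by rewrite ler_wpM2l // mulr_ge0 // ltW // expR_gt0.
by rewrite mulrACA.
Qed.

Lemma gibbs_mul_gap_le (b : R) (L : T -> R) h0 h : h0 \in H ->
  gibbs b L h * (b * (L h - L h0))
    <= gibbs b L h * (2 * ln #|H|%:R) + (if h \in H :\ h0 then 2 / #|H|%:R else 0).
Proof.
move=> h0H; set N : R := #|H|%:R.
have N_ge1 : 1 <= N by rewrite ler1n; apply/card_gt0P; exists h0.
have N_gt0 : 0 < N by lra.
have lnN_ge0 : 0 <= ln N := ln_ge0 N_ge1.
have p_ge0 := gibbs_ge0 b L h.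
have pa_ge0 : 0 <= gibbs b L h * (2 * ln N) by rewrite mulr_ge0 ?mulr_ge0.
case: ifPn => [/setD1P[_ hH] | ].
  (* Above the threshold 2 ln N the mass is at most exp (- t), and
     t exp (- t) <= 2 exp (- t / 2) < 2 / N. *)
  set t := b * (L h - L h0).
  case: (lerP t (2 * ln N)) => [t_le | t_gt].
    have := ler_wpM2l p_ge0 t_le; have : 0 <= 2 / N by rewrite divr_ge0 // ltW.
    lra.
  have pt_le : gibbs b L h * t <= t * expR (- t).
    by rewrite mulrC; apply: ler_wpM2l; [lra | exact: gibbs_le_expR_gap].
  have : expR (- (t / 2)) < N^-1 by rewrite -[N]lnK ?posrE // -expRN ltr_expR; lra.
  have := mulr_expRN_le t; lra.
rewrite in_setD1 negb_and negbK => /orP[/eqP-> | /(gibbs_out b L)->].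
  by rewrite subrr !mulr0 addr0 mulr_ge0 ?mulr_ge0 ?gibbs_ge0.
by rewrite !mul0r addr0.
Qed.

Lemma gibbs_expectation_le (b : R) (L : T -> R) h0 : 0 < b -> h0 \in H ->
  \sum_h gibbs b L h * L h <= L h0 + 4 * ln #|H|%:R / b.
Proof.
move=> b_gt0 h0H; set N : R := #|H|%:R.
have N_gt0 : 0 < N by rewrite ltr0n; apply/card_gt0P; exists h0.
have sum_gap : \sum_h gibbs b L h * (b * (L h - L h0)) <= 2 * ln N + 2 * (1 - N^-1).
  apply: le_trans (ler_sum _ (fun h _ => gibbs_mul_gap_le b L h h0H)) _.
  rewrite big_split /= -mulr_suml (gibbs_sum1 b L h0H) mul1r -big_mkcond sumr_const.
  rewrite -/N -[_ *+ #|_|]mulr_natr (_ : #|H :\ h0|%:R = N - 1 :> R); last first.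
    by rewrite /N (cardsD1 h0 H) h0H natrD addrAC subrr add0r.
  rewrite (_ : 2 / N * (N - 1) = 2 * (1 - N^-1)) //.
  by field; rewrite gt_eqF.
have E : \sum_h gibbs b L h * (b * (L h - L h0)) = b * (\sum_h gibbs b L h * L h - L h0).
  rewrite mulrBr mulr_sumr -[b * L h0]mul1r -(gibbs_sum1 b L h0H) mulr_suml -sumrB.
  by apply: eq_bigr => h _; ring.
have := ln_ge_1_subV N_gt0.
rewrite -lerBlDl ler_pdivlMr // mulrC; lra.
Qed.
End Gibbs.

Definition clamp01 (R : realFieldType) (t : R) : R :=
  if 1 <= t then 1 else if 0 <= t then t else 0.

Lemma clamp01_le1 (R : realFieldType) (t : R) : clamp01 t <= 1.
Proof. by rewrite /clamp01; case: (lerP 1 t); case: (lerP 0 t); lra. Qed.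

Lemma clamp01_lipschitz (R : realFieldType) (t s c : R) :
  0 <= c -> t <= s + c -> clamp01 t <= clamp01 s + c.
Proof.
rewrite /clamp01.
by case: (lerP 1 t); case: (lerP 0 t); case: (lerP 1 s); case: (lerP 0 s); lra.
Qed.

Definition example_neighbors d (e e' : example d) : Prop :=
  e.2 = e'.2 /\ exists i : 'I_d, forall j, j != i -> e.1 j = e'.1 j.

Lemma hamming_neighbors_le d (x x1 x2 : feat d) (i : 'I_d) :
  (forall j, j != i -> x1 j = x2 j) -> (hamming x x1 <= (hamming x x2).+1)%N.
Proof.
move=> x12; rewrite /hamming.
apply: leq_trans (subset_leq_card (_ : _ \subset i |: [set j | x j != x2 j])) _.
  apply/fintype.subsetP => j; rewrite !inE.
  by case: (eqVneq j i) => [-> | /x12 ->].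
by rewrite cardsU1; case: (i \notin _).
Qed.

Lemma sample_neighbors_sym d (S S' : seq (example d)) :
  sample_neighbors S S' -> sample_neighbors S' S.
Proof.
move=> [sz [k [k_lt [Skl [lab [i Ski]]]]]]; split=> //.
exists k; split; first by rewrite -sz.
split; first by move=> l /Skl.
by split=> //; exists i => j /Ski.
Qed.

Lemma sum_sample_neighbors_le (R : realFieldType) d (f : example d -> R) (c : R) S S' :
  (forall e e', example_neighbors e e' -> f e <= f e' + c) ->
  sample_neighbors S S' -> \sum_(e <- S) f e <= \sum_(e <- S') f e + c.
Proof.
move=> f_lip [sz [k [k_lt [Skl [lab [i Ski]]]]]].
rewrite !(big_nth (default_example d)) -sz !big_mkord.
rewrite (bigD1 (Ordinal k_lt)) //= [X in _ <= X + _](bigD1 (Ordinal k_lt)) //=.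
rewrite (eq_bigr (fun l : 'I_(size S) => f (nth (default_example d) S' l))); last first.
  by move=> l lk; rewrite Skl //; apply: contra lk => /eqP lk; apply/eqP/val_inj.
have := f_lip _ _ (conj lab (ex_intro _ i Ski)); lra.
Qed.

Lemma natr_count (R : pzSemiRingType) (T : Type) (p : pred T) (s : seq T) :
  (count p s)%:R = \sum_(x <- s) (p x)%:R :> R.
Proof. by elim: s => [|x s IH]; rewrite ?big_nil ?big_cons //= natrD IH. Qed.

Section RampLoss.
Variables (R : realType) (g' g : R) (d : nat).
Hypotheses (lt_g'g : g' < g) (d_gt0 : (0 < d)%N).

Let width : R := (g - g') * d%:R.

Let width_gt0 : 0 < width.
Proof. by rewrite mulr_gt0 ?ltr0n // subr_gt0. Qed.

Definition ramp (k : nat) : R := clamp01 ((g * d%:R - k%:R) / width).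

Lemma ramp_eq1 k : k%:R <= g' * d%:R -> ramp k = 1.
Proof.
by move=> k_le; rewrite /ramp /clamp01 ifT // ler_pdivlMr // mul1r /width mulrBl; lra.
Qed.

Lemma ramp_eq0 k : g * d%:R < k%:R -> ramp k = 0.
Proof.
move=> k_gt; have t_lt0 : (g * d%:R - k%:R) / width < 0.
  by rewrite ltr_pdivrMr // mul0r; lra.
by rewrite /ramp /clamp01 !lt_geF //; lra.
Qed.

Lemma ramp_le_succ k k' : (k' <= k.+1)%N -> ramp k <= ramp k' + width^-1.
Proof.
rewrite -(ler_nat R) -natr1 => k'_le.
apply: clamp01_lipschitz; first by rewrite invr_ge0 ltW.
rewrite -[X in _ <= _ + X]mul1r -mulrDl.
by apply: ler_wpM2r; [rewrite invr_ge0 ltW | lra].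
Qed.

Definition ramp_err (h : hyp d) (e : example d) : R :=
  \big[Num.max/0]_(x | h x != e.2) ramp (hamming x e.1).

Lemma ramp_err_ge0 h e : 0 <= ramp_err h e.
Proof. exact: bigmax_ge_id. Qed.

Lemma robust_err_le_ramp_err h e : (robust_err g' h e)%:R <= ramp_err h e.
Proof.
case: (boolP (robust_err g' h e)) => [/existsP[x /andP[hx x_near]] | _].
  by apply: (bigmax_sup x) => //; rewrite ramp_eq1.
exact: ramp_err_ge0.
Qed.

Lemma ramp_err_le_robust_err h e : ramp_err h e <= (robust_err g h e)%:R.
Proof.
apply: bigmax_le => [|x hx]; first by case: robust_err.
case: (boolP (robust_err g h e)) => [_ | /existsPn/(_ x)]; first exact: clamp01_le1.
by rewrite hx /= -ltNge => /ramp_eq0->.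
Qed.

Lemma ramp_err_neighbors_le h e e' :
  example_neighbors e e' -> ramp_err h e <= ramp_err h e' + width^-1.
Proof.
move=> [lab [i ee']]; apply: bigmax_le => [|x hx].
  by rewrite addr_ge0 ?ramp_err_ge0 // invr_ge0 ltW.
have near_x : (hamming x e'.1 <= (hamming x e.1).+1)%N.
  by apply: (hamming_neighbors_le _ (i := i)) => j /ee'->.
apply: le_trans (ramp_le_succ near_x) _.
by rewrite lerD2r; apply: (bigmax_sup x); rewrite -?lab.
Qed.

Definition ramp_risk (h : hyp d) (S : seq (example d)) : R :=
  (\sum_(e <- S) ramp_err h e) / (size S)%:R.

Lemma robust_risk_le_ramp_risk h S : robust_risk g' h S <= ramp_risk h S.
Proof.
rewrite /robust_risk /ramp_risk natr_count ler_wpM2r ?invr_ge0 //.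
by apply: ler_sum => e _; exact: robust_err_le_ramp_err.
Qed.

Lemma ramp_risk_le_robust_risk h S : ramp_risk h S <= robust_risk g h S.
Proof.
rewrite /robust_risk /ramp_risk natr_count ler_wpM2r ?invr_ge0 //.
by apply: ler_sum => e _; exact: ramp_err_le_robust_err.
Qed.

Lemma ramp_risk_neighbors h S S' : sample_neighbors S S' ->
  `|ramp_risk h S - ramp_risk h S'| <= (width * (size S)%:R)^-1.
Proof.
move=> nSS'; have sz : size S = size S' by case: nSS'.
have risk_le S1 S2 : size S1 = size S -> sample_neighbors S1 S2 ->
    ramp_risk h S1 <= ramp_risk h S2 + (width * (size S)%:R)^-1.
  move=> <- n12; rewrite /ramp_risk -(proj1 n12) invfM -mulrDl.
  rewrite ler_wpM2r ?invr_ge0 //.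
  by apply: sum_sample_neighbors_le n12 => e e'; exact: ramp_err_neighbors_le.
rewrite ler_distl; apply/andP; split; last exact: risk_le.
by rewrite lerBlDr; apply: risk_le; [rewrite sz | exact: sample_neighbors_sym].
Qed.

Variables (eps : R) (H : {set hyp d}).
Hypothesis eps_gt0 : 0 < eps.

Definition ramp_mechanism : mechanism R d :=
  fun S => gibbs H (eps * width * (size S)%:R / 2) (ramp_risk^~ S).

Let inv_temp_gt0 n : (0 < n)%N -> 0 < eps * width * n%:R / 2.
Proof. by move=> n_gt0; rewrite !mulr_gt0 ?invr_gt0 ?ltr0n ?subr_gt0. Qed.

Lemma ramp_mechanism_DP : sample_DP eps ramp_mechanism.
Proof.
move=> S S' nSS' E; rewrite mulr_sumr; apply: ler_sum => h _.
have [sz [k [k_lt _]]] := nSS'.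
have n_gt0 : (0 < size S)%N by apply: leq_ltn_trans k_lt.
rewrite /ramp_mechanism -sz.
apply: le_trans (gibbs_le_expR_mul h (ltW (inv_temp_gt0 n_gt0))
                   (fun h' _ => ramp_risk_neighbors h' nSS')) _.
rewrite (_ : 2 * _ / _ = eps) //.
by field; rewrite !gt_eqF ?ltr0n.
Qed.

Lemma ramp_mechanism_risk_le S h0 : S != [::] -> h0 \in H ->
  \sum_h ramp_mechanism S h * robust_risk g' h S
    <= robust_risk g h0 S
       + 8 * (ln #|H|%:R / (eps * (g - g') * d%:R * (size S)%:R)).
Proof.
move=> S_neq0 h0H.
have n_gt0 : (0 < size S)%N by rewrite lt0n size_eq0.
have b_gt0 := inv_temp_gt0 n_gt0.
apply: le_trans (_ : \sum_h ramp_mechanism S h * ramp_risk h S <= _).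
  apply: ler_sum => h _; apply: ler_wpM2l; first exact: gibbs_ge0.
  exact: robust_risk_le_ramp_risk.
apply: le_trans (gibbs_expectation_le _ b_gt0 h0H) _.
rewrite (_ : 4 * _ / _ = 8 * (ln #|H|%:R / (eps * (g - g') * d%:R * (size S)%:R))).
  by rewrite lerD2r ramp_risk_le_robust_risk.
rewrite /width; field.
by rewrite !gt_eqF // ?subr_gt0 // ltr0n.
Qed.

End RampLoss.

Theorem lemma6p4 : forall R : realType, exists C : R, 0 < C /\
  forall (d : nat) (gamma' gamma eps : R) (H : {set hyp d}),
    (0 < d)%N -> 0 < gamma' -> gamma' < gamma -> 0 < eps -> (0 < #|H|)%N ->
    exists M : mechanism R d,
      sample_DP eps M /\
      (forall S, is_pmf (M S)) /\
      (forall S h, h \notin H -> M S h = 0) /\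
      forall S : seq (example d), S != [::] ->
        forall h0, h0 \in H ->
          \sum_h M S h * robust_risk gamma' h S
            <= robust_risk gamma h0 S
               + C * (ln (#|H|%:R) / (eps * (gamma - gamma') * d%:R * (size S)%:R)).
Proof.
move=> R; exists 8; split => // d g' g eps H d_gt0 _ lt_g'g eps_gt0 /card_gt0P[h1 h1H].
exists (ramp_mechanism g' g eps H); split; first exact: ramp_mechanism_DP.
split; first by move=> S; split; [exact: gibbs_ge0 | exact: gibbs_sum1 h1H].
split; first by move=> S h; exact: gibbs_out.
by move=> S S_neq0 h0; exact: ramp_mechanism_risk_le.
Qed.
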